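(* Let $f$ be a (partial) function $A^\omega\to A^\omega$ realizable by a $1$-deterministic $2$-automaton. Then for every infinite word $x$ in the domain of $f$, $\rho(f(x)/x)=0$.
   Context: A $k$-automaton $\langle Q,A,\delta,I\rangle$ has finite state set $Q$, transitions $\delta\subseteq Q\times(A\cup\{\varepsilon\})^k\times Q$, initial states $I$; an infinite run is accepting if it starts in $I$ and all components of its label (componentwise concatenation of transition labels) are infinite. It is $\ell$-deterministic if $I$ is a singleton and, for two transitions from the same state with labels $(\alpha_i),(\alpha'_i)$, $\alpha_j=\varepsilon$ for some $j\le\ell$ implies $\alpha'_j=\varepsilon$, and $\alpha_i=\alpha'_i$ for all $i\le\ell$ implies equality of the remaining components and target states; it realizes the partial function mapping the first $\ell$ tapes to the remaining ones. A compressor is a $2$-deterministic $3$-automaton $\mathcal C$ (first input tape: the word $z$ to compress; second input tape: oracle $y$; third: output) such that for each fixed $y$ the map $z\mapsto\mathcal C(z,y)$ is injective. For the accepting run $q_0\xrightarrow{\alpha_1,\beta_1|w_1}q_1\xrightarrow{\alpha_2,\beta_2|w_2}\cdots$ with $z=\alpha_1\alpha_2\cdots$, $y=\beta_1\beta_2\cdots$, $\rho_{\mathcal C}(z/y)=\liminf_n|w_1\cdots w_n|/|\alpha_1\cdots\alpha_n|$, and $\rho(z/y)$ is the infimum of $\rho_{\mathcal C}(z/y)$ over all compressors. *)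

From HB Require Import structures.
From mathcomp Require Import all_boot all_order all_algebra.
From mathcomp Require Import all_classical all_reals.
From mathcomp Require Import ereal topology sequences.
Set Implicit Arguments. Unset Strict Implicit. Unset Printing Implicit Defensive.
Import Order.TTheory GRing.Theory Num.Theory.

Definition word (A : finType) := nat -> A.

(* A k-automaton <Q, A, delta, I>: labels are k-tuples over A ∪ {eps},
   encoded as finite functions 'I_k -> option A (None = eps). *)
Record automaton (A : finType) (k : nat) := Automaton {
  state : finType;
  trans : state -> {ffun 'I_k -> option A} -> state -> bool;
  init  : pred state }.
Arguments state {A k} a.
Arguments trans {A k} a _ _ _.
Arguments init {A k} a _.

Definition is_run (A : finType) (k : nat) (T : automaton A k)
    (st : nat -> state T) (lab : nat -> {ffun 'I_k -> option A}) : Prop :=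
  init T (st 0) /\ forall n, trans T (st n) (lab n) (st n.+1).

Definition comp_pre (A : finType) (k : nat)
    (lab : nat -> {ffun 'I_k -> option A}) (i : 'I_k) (n : nat) : seq A :=
  pmap id [seq lab m i | m <- iota 0 n].

Definition comp_is (A : finType) (k : nat)
    (lab : nat -> {ffun 'I_k -> option A}) (i : 'I_k) (x : word A) : Prop :=
  (forall N, exists n, (N <= size (comp_pre lab i n))%N) /\
  (forall n, comp_pre lab i n = mkseq x (size (comp_pre lab i n))).

Definition accepting_run (A : finType) (k : nat) (T : automaton A k)
    (st : nat -> state T) (lab : nat -> {ffun 'I_k -> option A})
    (xs : 'I_k -> word A) : Prop :=
  is_run st lab /\ forall i, comp_is lab i (xs i).

Arguments accepting_run {A k} T st lab xs.

Definition accepts (A : finType) (k : nat) (T : automaton A k)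
    (xs : 'I_k -> word A) : Prop :=
  exists st lab, accepting_run T st lab xs.

Definition deterministic (A : finType) (k : nat) (l : nat)
    (T : automaton A k) : Prop :=
  (exists q0 : state T, forall q, init T q = (q == q0)) /\
  forall p a q a' q', trans T p a q -> trans T p a' q' ->
    (forall j : 'I_k, (j < l)%N -> a j = None -> a' j = None) /\
    ((forall j : 'I_k, (j < l)%N -> a j = a' j) ->
       (forall j : 'I_k, (l <= j)%N -> a j = a' j) /\ q = q').

Definition words2 (A : finType) (x y : word A) (i : 'I_2) : word A :=
  if val i == 0%N then x else y.
Definition words3 (A : finType) (z y w : word A) (i : 'I_3) : word A :=
  match val i with 0 => z | 1 => y | _ => w end.

Definition realizes (A : finType) (T : automaton A 2)
    (dom : word A -> Prop) (f : word A -> word A) : Prop :=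
  forall x y, accepts T (words2 x y) <-> (dom x /\ f x = y).

Definition compressor (A : finType) (C : automaton A 3) : Prop :=
  deterministic 2 C /\
  forall y z z' w, accepts C (words3 z y w) -> accepts C (words3 z' y w) ->
    z = z'.

Definition tape0 : 'I_3 := @Ordinal 3 0 isT.
Definition tape2 : 'I_3 := @Ordinal 3 2 isT.

Local Open Scope ring_scope.
Local Open Scope ereal_scope.

Definition comp_ratio (R : realType) (A : finType)
    (lab : nat -> {ffun 'I_3 -> option A}) (n : nat) : \bar R :=
  (((size (comp_pre lab tape2 n))%:R / (size (comp_pre lab tape0 n))%:R)
     : R)%:E.

Definition rhoC (R : realType) (A : finType) (C : automaton A 3)
    (z y : word A) : set (\bar R) :=
  [set r | exists st lab w, accepting_run C st lab (words3 z y w) /\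
            r = limn_einf (comp_ratio R lab)].

Definition rho (R : realType) (A : finType) (z y : word A) : \bar R :=
  ereal_inf [set r | exists C : automaton A 3, compressor C /\ @rhoC R A C z y r].

From mathcomp Require Import all_boot all_order all_algebra.
From mathcomp Require Import all_classical all_reals.
From mathcomp Require Import ereal topology sequences normedtype.
Set Implicit Arguments. Unset Strict Implicit. Unset Printing Implicit Defensive.
Import Order.TTheory GRing.Theory Num.Theory.

(* For every k, a compressor with oracle x simulates T on x (its tape 1), checks that
   its input z is the output of T, and writes one letter per k+1 letters of z; its
   compression ratio is thus at most 1/(k+1). Since T is 1-deterministic, its run on
   the oracle is unique, so z is determined by the oracle and the compressor is
   injective. Hence rho(f x / x) <= 1/(k+1) for every k. *)

Definition tape1 : 'I_3 := @Ordinal 3 1 isT.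
Definition tapeI : 'I_2 := @Ordinal 2 0 isT.
Definition tapeO : 'I_2 := @Ordinal 2 1 isT.

Lemma ord3_cases (j : 'I_3) : [\/ j = tape0, j = tape1 | j = tape2].
Proof.
by case: j => [[|[|[|//]]] ?]; [apply: Or31 | apply: Or32 | apply: Or33]; apply/val_inj.
Qed.

Lemma ord2_cases (j : 'I_2) : j = tapeI \/ j = tapeO.
Proof. by case: j => [[|[|//]] ?]; [left | right]; apply/val_inj. Qed.

Lemma mkseq_cst (T : Type) (a : T) n : mkseq (fun=> a) n = nseq n a.
Proof.
apply: (@eq_from_nth _ a) => [|i]; rewrite size_mkseq ?size_nseq // => lt_in.
by rewrite nth_mkseq // nth_nseq lt_in.
Qed.

Section Labels.
Variables (A : finType) (k : nat).
Implicit Types (lab : nat -> {ffun 'I_k -> option A}) (x : word A).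

Lemma comp_preS lab i n :
  comp_pre lab i n.+1 = comp_pre lab i n ++ (if lab n i is Some a then [:: a] else [::]).
Proof. by rewrite /comp_pre -addn1 iotaD map_cat pmap_cat /=; case: (lab n i). Qed.

Lemma eq_comp_pre k' lab (lab' : nat -> {ffun 'I_k' -> option A}) i i' n :
  (forall m, m < n -> lab m i = lab' m i') -> comp_pre lab i n = comp_pre lab' i' n.
Proof.
by move=> eq_lab; congr pmap; apply/eq_in_map => m; rewrite mem_iota add0n => /eq_lab.
Qed.

Lemma comp_is_letter lab i x n a :
  comp_is lab i x -> lab n i = Some a -> a = x (size (comp_pre lab i n)).
Proof.
move=> [_ pre] lab_ni; have := pre n.+1; rewrite comp_preS lab_ni.
move/(congr1 (fun s => nth a s (size (comp_pre lab i n)))).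
by rewrite nth_cat ltnn subnn nth_mkseq // size_cat addn1.
Qed.

Lemma comp_is_inj lab i x x' : comp_is lab i x -> comp_is lab i x' -> x = x'.
Proof.
move=> [long pre] [_ pre']; apply/funext => m; have [n lt_mn] := long m.+1.
have := congr1 (fun s => nth (x m) s m) (pre n).
by rewrite /= {1}pre' !nth_mkseq.
Qed.

Lemma eq_label_same_word lab lab' i i' x n :
  comp_is lab i x -> comp_is lab' i' x -> comp_pre lab i n = comp_pre lab' i' n ->
  (lab n i == None) = (lab' n i' == None) -> lab n i = lab' n i'.
Proof.
move=> cx cx' eq_pre; case E: (lab n i) => [a|]; case E': (lab' n i') => [a'|] //= _.
by rewrite (comp_is_letter cx E) (comp_is_letter cx' E') eq_pre.
Qed.

Section Deterministic.
Variables (l : nat) (T : automaton A k).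
Hypothesis detT : deterministic l T.

Lemma deterministic_eps p a q a' q' (j : 'I_k) :
  trans T p a q -> trans T p a' q' -> j < l -> (a j == None) = (a' j == None).
Proof.
have [_ dT] := detT => t t' lt_jl.
by apply/eqP/eqP; [exact: (dT _ _ _ _ _ t t').1 | exact: (dT _ _ _ _ _ t' t).1].
Qed.

Lemma deterministic_step p a q a' q' :
  trans T p a q -> trans T p a' q' -> (forall j : 'I_k, j < l -> a j = a' j) ->
  a = a' /\ q = q'.
Proof.
have [_ dT] := detT => t t' eq_in; have [eq_out ->] := (dT _ _ _ _ _ t t').2 eq_in.
by split=> //; apply/ffunP => j; case: (ltnP j l) => [/eq_in | /eq_out].
Qed.

Lemma deterministic_run_unique (st st' : nat -> state T) lab lab' :
  is_run st lab -> is_run st' lab' ->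
  (forall n, st n = st' n -> (forall m, m < n -> lab m = lab' m) ->
     forall j : 'I_k, j < l -> lab n j = lab' n j) ->
  lab = lab'.
Proof.
move=> [init0 run] [init0' run'] eq_in; have [[q0 initT] _] := detT.
have agree n : st n = st' n /\ forall m, m < n -> lab m = lab' m.
  elim: n => [|n [eq_st eq_lab]].
    by move: init0 init0'; rewrite !initT => /eqP -> /eqP ->.
  have t' := run' n; rewrite -eq_st in t'.
  have [eq_labn ->] := deterministic_step (run n) t' (eq_in n eq_st eq_lab).
  by split=> // m; rewrite ltnS leq_eqVlt => /predU1P[-> | /eq_lab].
by apply/funext => n; apply: (agree n.+1).2.
Qed.

End Deterministic.
End Labels.

Lemma ratio_divn_le (R : numFieldType) m d :
  ((m %/ d.+1)%:R / m%:R <= d.+1%:R^-1 :> R)%R.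
Proof.
have [->|m_gt0] := posnP m; first by rewrite div0n mul0r invr_ge0 ler0n.
rewrite ler_pdivrMr ?ltr0n // mulrC ler_pdivlMr ?ltr0Sn // -natrM ler_nat.
exact: leq_divM.
Qed.

Section Simulation.
Variables (A : finType) (T : automaton A 2) (q0 : state T) (a0 : A) (k : nat).

Definition sim_state := (state T * option A * 'I_k.+1)%type.

Definition T_label (L : {ffun 'I_3 -> option A}) (out : option A) :
  {ffun 'I_2 -> option A} := [ffun i => if val i == 0 then L tape1 else out].

(* A state holds a state of T, the letter written by T at the previous step (to be
   read now on tape 0) and a counter mod k+1. Reading T's output one step late makes
   the move of tape 0 depend on the state only, as 2-determinism requires, whereas
   whether T writes may depend on the letter it reads. *)
Definition sim_trans (s : sim_state) (L : {ffun 'I_3 -> option A}) (s' : sim_state) :=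
  let: (p, buf, c) := s in let: (q, buf', c') := s' in
  [&& trans T p (T_label L buf') q,
      L tape0 == buf,
      c' == (if buf is Some _ then inZp c.+1 else c) &
      L tape2 == if (buf != None) && (c' == ord0) then Some a0 else None].

Definition sim_aut : automaton A 3 :=
  @Automaton A 3 sim_state sim_trans (pred1 (q0, None, ord0)).

Lemma sim_trans_tape0 s L s' : trans sim_aut s L s' -> L tape0 = s.1.2.
Proof. by case: s s' => [[p buf] c] [[q b] c'] /and4P[_ /eqP]. Qed.

Lemma sim_deterministic : deterministic 1 T -> deterministic 2 sim_aut.
Proof.
move=> detT; split; first by exists (q0, None, ord0).
move=> [[p buf] c] L [[q b] c'] L' [[q' b'] c''].
move=> /and4P[tT /eqP L0 /eqP Lc /eqP L2] /and4P[tT' /eqP L0' /eqP Lc' /eqP L2'].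
split=> [j|eq_in].
  case: (ord3_cases j) => -> // _; first by rewrite L0 L0'.
  have := deterministic_eps detT tT tT' (j := tapeI) isT; rewrite !ffunE /= => eq_eps.
  by move/eqP; rewrite eq_eps => /eqP.
have /(deterministic_step detT tT tT')[eq_a ->] :
    forall j : 'I_2, j < 1 -> T_label L b j = T_label L' b' j.
  by move=> j; case: (ord2_cases j) => -> // _; rewrite !ffunE /= eq_in.
have <- : b = b' by move/ffunP/(_ tapeO): eq_a; rewrite !ffunE.
have eq_c : c' = c'' by rewrite Lc Lc'.
split=> [j|]; last by rewrite eq_c.
by case: (ord3_cases j) => -> // _; rewrite L2 L2' eq_c.
Qed.

Lemma sim_inj : deterministic 1 T -> forall y z z' w,
  accepts sim_aut (words3 z y w) -> accepts sim_aut (words3 z' y w) -> z = z'.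
Proof.
move=> detT y z z' w [st [lab [run comp]]] [st' [lab' [run' comp']]].
suff eq_lab : lab = lab'.
  by apply: (comp_is_inj (comp tape0)); rewrite eq_lab; exact: (comp' tape0).
apply: (deterministic_run_unique (sim_deterministic detT) run run').
move=> n eq_st eq_lab j; case: (ord3_cases j) => -> // _.
  by rewrite (sim_trans_tape0 (run.2 n)) (sim_trans_tape0 (run'.2 n)) eq_st.
apply: (eq_label_same_word (comp tape1) (comp' tape1)).
  by apply: eq_comp_pre => m /eq_lab ->.
have t' := run'.2 n; rewrite -eq_st in t'.
exact: (deterministic_eps (sim_deterministic detT) (run.2 n) t' (j := tape1) isT).
Qed.

Lemma sim_compressor : deterministic 1 T -> compressor sim_aut.
Proof. by move=> detT; split; [exact: sim_deterministic | exact: sim_inj]. Qed.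

Section Run.
Variables (st : nat -> state T) (lab : nat -> {ffun 'I_2 -> option A}).

Definition sim_buf n := if n is m.+1 then lab m tapeO else None.

Definition sim_read n := size (comp_pre lab tapeO n.-1).

Definition sim_run_state n : state sim_aut := (st n, sim_buf n, inZp (sim_read n)).

Definition sim_run_label n : {ffun 'I_3 -> option A} :=
  [ffun j : 'I_3 => match val j with
    | 0 => sim_buf n
    | 1 => lab n tapeI
    | _ => if (sim_buf n != None) && (inZp (sim_read n.+1) == ord0 :> 'I_k.+1)
           then Some a0 else None end].

Lemma comp_pre_tapeO n : comp_pre lab tapeO n =
  comp_pre lab tapeO n.-1 ++ (if sim_buf n is Some a then [:: a] else [::]).
Proof. by case: n => [|n] //=; rewrite comp_preS. Qed.

Lemma sim_readS n : sim_read n.+1 = sim_read n + (sim_buf n != None).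
Proof. by rewrite /sim_read /= comp_pre_tapeO size_cat; case: (sim_buf n). Qed.

Lemma sim_tape0 n : comp_pre sim_run_label tape0 n = comp_pre lab tapeO n.-1.
Proof.
elim: n => [|n IH] //; rewrite comp_preS IH ffunE /= [in RHS]comp_pre_tapeO.
by case: (sim_buf n).
Qed.

Lemma sim_tape1 n : comp_pre sim_run_label tape1 n = comp_pre lab tapeI n.
Proof. by apply: eq_comp_pre => m _; rewrite ffunE. Qed.

Lemma sim_tape2 n : comp_pre sim_run_label tape2 n = nseq (sim_read n %/ k.+1) a0.
Proof.
elim: n => [|n IH] //; rewrite comp_preS IH ffunE /= sim_readS.
case: (sim_buf n) => [b|] /=; last by rewrite addn0 cats0.
rewrite addn1 divnS // -val_eqE /= /dvdn.
by case: (_ %% _ == 0); rewrite addnC nseqD /= ?cats0.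
Qed.

Lemma sim_is_run : (forall q, init T q = (q == q0)) -> is_run st lab ->
  is_run sim_run_state sim_run_label.
Proof.
move=> initT [init0 run]; split.
  rewrite /= /sim_run_state.
  have /eqP -> : st 0 == q0 by rewrite -initT.
  by apply/eqP; congr (_, _, _); apply/val_inj.
move=> n; rewrite /= /sim_run_state /=; apply/and4P; split.
- suff -> : T_label (sim_run_label n) (sim_buf n.+1) = lab n by [].
  by apply/ffunP => i; case: (ord2_cases i) => ->; rewrite !ffunE.
- by rewrite ffunE.
- rewrite sim_readS; case: (sim_buf n) => [b|]; apply/eqP/val_inj => /=.
    by rewrite addn1 -[(_ %% _).+1]addn1 modnDml addn1.
  by rewrite addn0.
- by rewrite /sim_run_label ffunE.
Qed.

Lemma sim_accepting x fx : (forall q, init T q = (q == q0)) ->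
  accepting_run T st lab (words2 x fx) ->
  accepting_run sim_aut sim_run_state sim_run_label (words3 fx x (fun=> a0)).
Proof.
move=> initT [run comp]; split; first exact: sim_is_run.
have [long_fx pre_fx] : comp_is lab tapeO fx := comp tapeO.
have [long_x pre_x] : comp_is lab tapeI x := comp tapeI.
move=> j; case: (ord3_cases j) => ->; split=> [N|n] /=.
- by have [n ?] := long_fx N; exists n.+1; rewrite sim_tape0.
- by rewrite sim_tape0; exact: pre_fx.
- by have [n ?] := long_x N; exists n; rewrite sim_tape1.
- by rewrite sim_tape1; exact: pre_x.
- have [n ?] := long_fx (N * k.+1); exists n.+1.
  by rewrite sim_tape2 size_nseq leq_divRL.
- by rewrite sim_tape2 size_nseq mkseq_cst.
Qed.

Lemma sim_ratio_le (R : realType) n :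
  (comp_ratio R sim_run_label n <= (k.+1%:R^-1)%:E)%E.
Proof.
by rewrite /comp_ratio sim_tape2 sim_tape0 size_nseq lee_fin; exact: ratio_divn_le.
Qed.

End Run.

End Simulation.

Section Rho.
Variable R : realType.
Local Open Scope ereal_scope.

Lemma limn_einf_ge (u : (\bar R)^nat) c : (forall n, c <= u n) -> c <= limn_einf u.
Proof.
move=> le_cu; rewrite limn_einf_lim; apply: lime_ge; first exact: is_cvg_einfs.
by apply: nearW => n; apply: le_ereal_inf_tmp => _ [m _ <-]; exact: le_cu.
Qed.

Lemma limn_einf_le (u : (\bar R)^nat) c : (forall n, u n <= c) -> limn_einf u <= c.
Proof.
move=> le_uc; rewrite limn_einf_lim; apply: lime_le; first exact: is_cvg_einfs.
apply: nearW => n; apply: (le_trans _ (le_uc n)).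
by apply: ereal_inf_lbound; exists n => /=.
Qed.

Lemma rho_ge0 (A : finType) (z y : word A) : 0 <= rho R z y.
Proof.
apply: le_ereal_inf_tmp => _ [C [_ [st [lab [w [_ ->]]]]]].
by apply: limn_einf_ge => n; rewrite lee_fin divr_ge0.
Qed.

Lemma rho_le (A : finType) (C : automaton A 3) st lab (z y w : word A) c :
  compressor C -> accepting_run C st lab (words3 z y w) ->
  (forall n, comp_ratio R lab n <= c) -> rho R z y <= c.
Proof.
move=> compC acc le_ratio; apply: le_trans (limn_einf_le le_ratio).
by apply: ereal_inf_lbound; exists C; split=> //; exists st, lab, w.
Qed.

Lemma le_invS_eq0 (e : \bar R) : 0 <= e -> (forall k, e <= (k.+1%:R^-1)%:E) -> e = 0.
Proof.
case: e => [r| |] // r_ge0 le_r; last by have := le_r 0%N.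
rewrite lee_fin in r_ge0; congr EFin; apply/le_anti; rewrite r_ge0 andbT leNgt.
apply/negP => /ltr_add_invr[k]; rewrite add0r -lte_fin => /lt_le_trans/(_ (le_r k)).
by rewrite ltxx.
Qed.

End Rho.

Theorem proposition3 (R : realType) (A : finType) (T : automaton A 2)
    (dom : word A -> Prop) (f : word A -> word A) :
  deterministic 1 T -> realizes T dom f ->
  forall x : word A, dom x -> rho R (f x) x = 0%E.
Proof.
move=> detT realT x dom_x.
have [st [lab acc]] : accepts T (words2 x (f x)) by apply/realT.
have [[q0 initT] _] := detT.
apply: le_invS_eq0 (rho_ge0 _ _ _) _ => k.
pose a0 := x 0%N.
exact: rho_le (sim_compressor q0 a0 k detT) (sim_accepting a0 k initT acc)
  (sim_ratio_le a0 k lab R).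
Qed.
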